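(* Let $k\ge1$ and $g=H^{\otimes k}$, a $2^k\times2^k$ matrix, where $H=\begin{pmatrix}1&1\\1&-1\end{pmatrix}$. Then $T:=\sqrt{M_1M_2}\,\|g\|_2=2^{3k/2}$ and the quantum value $Q(g)$ equals $2^{3k/2}$ (attained). Moreover, for every even $k$ the local bound $B(g)$ equals $2^{3k/2}$, so the corresponding inequality admits no quantum violation.
   Context: Here $M_1=M_2=2^k$. $\|g\|_2$ is the largest singular value. The quantum value $Q(g)$ is the supremum of $\sum_{x_1,x_2}g_{x_1,x_2}\operatorname{tr}(\rho\,\mathcal A_1(x_1)\otimes\mathcal A_2(x_2))$ over finite-dimensional complex Hilbert spaces $\mathcal H_1,\mathcal H_2$, density operators $\rho$ on $\mathcal H_1\otimes\mathcal H_2$ and Hermitian operators $\mathcal A_i(x_i)$ on $\mathcal H_i$ with eigenvalues in $[-1,1]$. The local bound is $B(g)=\max\{\sum_{x_1,x_2}g_{x_1,x_2}a_{x_1}b_{x_2}: a\in\{\pm1\}^{M_1},b\in\{\pm1\}^{M_2}\}$. *)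

From HB Require Import structures.
From mathcomp Require Import all_boot all_order all_algebra.
From mathcomp Require Import character.
Set Implicit Arguments. Unset Strict Implicit. Unset Printing Implicit Defensive.
Import Order.TTheory GRing.Theory Num.Theory.
Local Open Scope ring_scope.

Definition hadamard2 (F : fieldType) : 'M[F]_2 :=
  \matrix_(i < 2, j < 2) (if (i == 1%N :> nat) && (j == 1%N :> nat) then -1 else 1).

Fixpoint hadamard (F : fieldType) (k : nat) : 'M[F]_(2 ^ k) :=
  match k return 'M[F]_(2 ^ k) with
  | 0 => 1%:M
  | k'.+1 => castmx (esym (expnS 2 k'), esym (expnS 2 k'))
                    (tprod (hadamard2 F) (hadamard F k'))
  end.

Definition adjmx (C : numClosedFieldType) m n (A : 'M[C]_(m, n)) : 'M[C]_(n, m) :=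
  (map_mx Num.conj A)^T.

Definition largest_singular_value (C : numClosedFieldType) n (g : 'M[C]_n) (s : C) :=
  [/\ 0 <= s, eigenvalue (adjmx g *m g) (s ^+ 2)
    & forall t : C, 0 <= t -> eigenvalue (adjmx g *m g) (t ^+ 2) -> t <= s].

Definition hermitian (C : numClosedFieldType) n (A : 'M[C]_n) : Prop :=
  adjmx A = A.

Definition observable (C : numClosedFieldType) n (A : 'M[C]_n) : Prop :=
  hermitian A /\ forall a : C, eigenvalue A a -> -1 <= a <= 1.

Definition density (C : numClosedFieldType) n (rho : 'M[C]_n) : Prop :=
  [/\ hermitian rho, (forall a : C, eigenvalue rho a -> 0 <= a) & \tr rho = 1].

Definition qvalue (C : numClosedFieldType) M1 M2 (g : 'M[C]_(M1, M2)) d1 d2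
  (rho : 'M[C]_(d1 * d2)) (A1 : 'I_M1 -> 'M[C]_d1) (A2 : 'I_M2 -> 'M[C]_d2) : C :=
  \sum_(x1 < M1) \sum_(x2 < M2) g x1 x2 * \tr (rho *m tprod (A1 x1) (A2 x2)).

(* Quantum strategies: finite-dimensional H1 = C^d1, H2 = C^d2. *)
Definition qstrategy (C : numClosedFieldType) M1 M2 d1 d2
  (rho : 'M[C]_(d1 * d2)) (A1 : 'I_M1 -> 'M[C]_d1) (A2 : 'I_M2 -> 'M[C]_d2) : Prop :=
  density rho /\ (forall x1, observable (A1 x1)) /\ (forall x2, observable (A2 x2)).

Definition sgnb (R : pzRingType) (b : bool) : R := (-1) ^+ b.

Definition local_value (R : realDomainType) M1 M2 (g : 'M[R]_(M1, M2))
  (a : {ffun 'I_M1 -> bool}) (b : {ffun 'I_M2 -> bool}) : R :=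
  \sum_(x1 < M1) \sum_(x2 < M2) g x1 x2 * sgnb R (a x1) * sgnb R (b x2).

(* B(g) = max over a in {+-1}^M1, b in {+-1}^M2 (seeded with a = b = all ones). *)
Definition local_bound (R : realDomainType) M1 M2 (g : 'M[R]_(M1, M2)) : R :=
  \big[Num.max/local_value g [ffun=> false] [ffun=> false]]_(a : {ffun 'I_M1 -> bool})
   \big[Num.max/local_value g [ffun=> false] [ffun=> false]]_(b : {ffun 'I_M2 -> bool})
     local_value g a b.

From Pilot Require Import Defs.
From HB Require Import structures.
From mathcomp Require Import all_boot all_order all_algebra character.
From mathcomp Require Import zify ring.
From mathcomp Require spectral.
Set Implicit Arguments. Unset Strict Implicit. Unset Printing Implicit Defensive.
Import Order.TTheory GRing.Theory Num.Theory.
Local Open Scope ring_scope.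

(* Let H_k = H^(x)k be the 2^k x 2^k Hadamard matrix, M = 2^k.  We prove
   (1) H_k* H_k = M I, so the only singular value is 2^(k/2) and
       T = sqrt(M M) ||H_k|| = 2^(3k/2);
   (2) Q(H_k) <= 2^(3k/2): a Tsirelson-type argument.  For commuting
       Hermitian families a_x, b_y with rho(a_x^2), rho(b_y^2) <= 1 and a real
       matrix g whose rows are orthogonal of squared norm t^2, expanding
       0 <= sum_y rho((sum_x g_xy a_x - t b_y)^2) gives
       sum g_xy rho(a_x b_y) <= M t  ([correlation_bound]);
   (3) the bound is attained by k parallel CHSH strategies (Pauli observables
       on k maximally entangled pairs), because the Frobenius correlation is
       multiplicative under tensor powers ([frob_corr_tensor]);
   (4) for k = 2m, B(H_k) = 2^(3m): the same expansion with scalars bounds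
       every local value ([local_value_le]) and the sign pattern of the
       bent function x_1 x_2 + x_3 x_4 + ..., an eigenvector of H_k with
       eigenvalue 2^m, attains the bound ([hadamard_bent]). *)

Lemma sum_delta (R : pzSemiRingType) (I : finType) (i : I) (F : I -> R) :
  \sum_j (i == j)%:R * F j = F i.
Proof.
rewrite (bigD1 i) //= eqxx mul1r big1 ?addr0 // => j /negbTE.
by rewrite eq_sym => ->; rewrite mul0r.
Qed.

Section KroneckerIndex.
Variables m n : nat.

(* Row [i * n + j] of a Kronecker product [tprod A B] (A with m rows, B with
   n rows) is indexed by the pair (i, j); [kron_fst], [kron_snd] decode it. *)
Lemma kron_idx_subproof (i : 'I_m) (j : 'I_n) : (i * n + j < m * n)%N.
Proof. by have := ltn_ord i; have := ltn_ord j; nia. Qed.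

Definition kron_idx (i : 'I_m) (j : 'I_n) : 'I_(m * n) :=
  Ordinal (kron_idx_subproof i j).

Lemma kron_width_gt0 (l : 'I_(m * n)) : (0 < n)%N.
Proof. by case: n l => [|//] [l]; rewrite muln0. Qed.

Lemma kron_fst_subproof (l : 'I_(m * n)) : (l %/ n < m)%N.
Proof. by rewrite ltn_divLR ?kron_width_gt0. Qed.

Lemma kron_snd_subproof (l : 'I_(m * n)) : (l %% n < n)%N.
Proof. by rewrite ltn_pmod ?kron_width_gt0. Qed.

Definition kron_fst (l : 'I_(m * n)) : 'I_m := Ordinal (kron_fst_subproof l).
Definition kron_snd (l : 'I_(m * n)) : 'I_n := Ordinal (kron_snd_subproof l).

Lemma kron_idxK (l : 'I_(m * n)) : kron_idx (kron_fst l) (kron_snd l) = l.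
Proof. by apply: val_inj => /=; rewrite -divn_eq. Qed.

Lemma kron_fstK i j : kron_fst (kron_idx i j) = i.
Proof.
apply: val_inj => /=; have n_gt0 : (0 < n)%N by case: j => j; case: (n).
by rewrite divnMDl // divn_small ?addn0.
Qed.

Lemma kron_sndK i j : kron_snd (kron_idx i j) = j.
Proof. by apply: val_inj => /=; rewrite modnMDl modn_small. Qed.

Lemma kron_idx_eq i j i' j' :
  (kron_idx i j == kron_idx i' j') = (i == i') && (j == j').
Proof.
apply/eqP/andP => [e|[/eqP-> /eqP->]] //; split; apply/eqP.
  by rewrite -(kron_fstK i j) e kron_fstK.
by rewrite -(kron_sndK i j) e kron_sndK.
Qed.

Lemma sum_kron_idx (V : nmodType) (F : 'I_(m * n) -> V) :
  \sum_l F l = \sum_(i < m) \sum_(j < n) F (kron_idx i j).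
Proof.
rewrite pair_big /= (reindex (fun p : 'I_m * 'I_n => kron_idx p.1 p.2)) //.
exists (fun l => (kron_fst l, kron_snd l)) => [[i j] _ | l _] /=.
  by rewrite kron_fstK kron_sndK.
by rewrite kron_idxK.
Qed.

End KroneckerIndex.

Lemma kron_matrixP (T : Type) m1 m2 n1 n2 (X Y : 'M[T]_(m1 * m2, n1 * n2)) :
  (forall (i1 : 'I_m1) (i2 : 'I_m2) (j1 : 'I_n1) (j2 : 'I_n2),
     X (kron_idx i1 i2) (kron_idx j1 j2) = Y (kron_idx i1 i2) (kron_idx j1 j2)) ->
  X = Y.
Proof. by move=> XY; apply/matrixP => i j; rewrite -(kron_idxK i) -(kron_idxK j). Qed.

Section KroneckerEntries.
Variable F : fieldType.

Lemma trow_entry n1 (a : 'rV[F]_n1) m2 n2 (B : 'M[F]_(m2, n2)) i2 j1 j2 :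
  trow a B i2 (kron_idx j1 j2) = a 0 j1 * B i2 j2.
Proof.
elim: n1 a j1 => [|n1 IH] a j1; first by case: j1.
case: (unliftP 0 j1) => [j1' ->|->] /=.
  have -> : kron_idx (lift 0 j1') j2 = rshift n2 (kron_idx j1' j2).
    by apply: val_inj => /=; rewrite /bump leq0n /=; nia.
  by rewrite row_mxEr IH !mxE; congr (a _ _ * _); apply: val_inj.
have -> : kron_idx (0 : 'I_n1.+1) j2 = lshift (n1 * n2) j2 by apply: val_inj.
by rewrite row_mxEl !mxE; congr (a _ _ * _); apply: val_inj.
Qed.

Lemma tprod_entry m1 n1 (A : 'M[F]_(m1, n1)) m2 n2 (B : 'M[F]_(m2, n2)) i1 i2 j1 j2 :
  tprod A B (kron_idx i1 i2) (kron_idx j1 j2) = A i1 j1 * B i2 j2.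
Proof.
elim: m1 A i1 => [|m1 IH] A i1; first by case: i1.
case: (unliftP 0 i1) => [i1' ->|->] /=.
  have -> : kron_idx (lift 0 i1') i2 = rshift m2 (kron_idx i1' i2).
    by apply: val_inj => /=; rewrite /bump leq0n /=; nia.
  by rewrite col_mxEd IH !mxE; congr (A _ _ * _); apply: val_inj.
have -> : kron_idx (0 : 'I_m1.+1) i2 = lshift (m1 * m2) i2 by apply: val_inj.
by rewrite col_mxEu trow_entry !mxE; congr (A _ _ * _); apply: val_inj.
Qed.

Lemma tprod_scalar m n (a b : F) :
  tprod (a%:M : 'M_m) (b%:M : 'M_n) = (a * b)%:M.
Proof.
apply: kron_matrixP => i1 i2 j1 j2.
by rewrite tprod_entry !mxE kron_idx_eq; case: (i1 == j1); case: (i2 == j2);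
  rewrite ?mulr1n ?mulr0n ?mulr0 ?mul0r.
Qed.

Lemma castmx_mul m n (e : m = n) (A B : 'M[F]_m) :
  castmx (e, e) A *m castmx (e, e) B = castmx (e, e) (A *m B).
Proof. by case: n / e. Qed.

Lemma castmx_scalar m n (e : m = n) (a : F) : castmx (e, e) (a%:M : 'M_m) = a%:M.
Proof. by case: n / e. Qed.

Lemma tprodBl m1 n1 m2 n2 (A A' : 'M[F]_(m1, n1)) (B : 'M[F]_(m2, n2)) :
  tprod (A - A') B = tprod A B - tprod A' B.
Proof. by apply: kron_matrixP => *; rewrite !mxE !tprod_entry !mxE mulrBl. Qed.

Lemma tprodBr m1 n1 m2 n2 (A : 'M[F]_(m1, n1)) (B B' : 'M[F]_(m2, n2)) :
  tprod A (B - B') = tprod A B - tprod A B'.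
Proof. by apply: kron_matrixP => *; rewrite !mxE !tprod_entry !mxE mulrBr. Qed.
End KroneckerEntries.

Section BinaryIndex.
Variable k : nat.

(* An index of the (k+1)-fold tensor power splits into a leading bit and an
   index of the k-fold power, matching the recursion defining [hadamard]. *)
Definition pow2S_eq : (2 * 2 ^ k = 2 ^ k.+1)%N := esym (expnS 2 k).

Definition cons_idx (i : 'I_2) (x : 'I_(2 ^ k)) : 'I_(2 ^ k.+1) :=
  cast_ord pow2S_eq (kron_idx i x).
Definition idx_head (x : 'I_(2 ^ k.+1)) : 'I_2 :=
  kron_fst (cast_ord (esym pow2S_eq) x).
Definition idx_tail (x : 'I_(2 ^ k.+1)) : 'I_(2 ^ k) :=
  kron_snd (cast_ord (esym pow2S_eq) x).

Lemma cons_idxK x : cons_idx (idx_head x) (idx_tail x) = x.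
Proof. by rewrite /cons_idx /idx_head /idx_tail kron_idxK cast_ordKV. Qed.

Lemma idx_headK i x : idx_head (cons_idx i x) = i.
Proof. by rewrite /idx_head cast_ordK kron_fstK. Qed.

Lemma idx_tailK i x : idx_tail (cons_idx i x) = x.
Proof. by rewrite /idx_tail cast_ordK kron_sndK. Qed.

Lemma cons_idx_ind (P : 'I_(2 ^ k.+1) -> Prop) :
  (forall i x, P (cons_idx i x)) -> forall x, P x.
Proof. by move=> PP x; rewrite -(cons_idxK x). Qed.

Lemma sum_cons_idx (V : nmodType) (F : 'I_(2 ^ k.+1) -> V) :
  \sum_x F x = \sum_(i < 2) \sum_(x < 2 ^ k) F (cons_idx i x).
Proof.
transitivity (\sum_l F (cast_ord pow2S_eq l)); last exact: sum_kron_idx.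
rewrite (reindex (cast_ord pow2S_eq)) //.
by exists (cast_ord (esym pow2S_eq)) => x _; rewrite ?cast_ordK ?cast_ordKV.
Qed.
End BinaryIndex.

Lemma sum_ord2 (V : nmodType) (F : 'I_2 -> V) : \sum_(i < 2) F i = F 0 + F 1.
Proof. by rewrite big_ord_recl big_ord1; congr (_ + F _); apply: val_inj. Qed.

Section HadamardMatrix.
Variable F : fieldType.
Local Notation H2 := (hadamard2 F).
Local Notation H := (hadamard F).

Lemma hadamard_consE k i1 x1 i2 x2 :
  H k.+1 (cons_idx i1 x1) (cons_idx i2 x2) = H2 i1 i2 * H k x1 x2.
Proof. by rewrite /= castmxE -tprod_entry; congr (tprod _ _ _ _); apply: val_inj. Qed.

Lemma hadamard2_sign (i j : 'I_2) : H2 i j = 1 \/ H2 i j = -1.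
Proof. by rewrite mxE; case: ifP; [right|left]. Qed.

Lemma hadamard_sign k x y : H k x y = 1 \/ H k x y = -1.
Proof.
elim: k x y => [|k IH] x y.
  have /eqP-> : x == y by case: x y => [[|//] ?] [[|//] ?].
  by rewrite /= mxE eqxx; left.
move: x y; apply: cons_idx_ind => i1 x1; apply: cons_idx_ind => i2 x2.
rewrite hadamard_consE.
have [->|->] := hadamard2_sign i1 i2; have [->|->] := IH x1 x2;
  rewrite ?mulr1 ?mulrN1 ?opprK; by [left|right].
Qed.

Lemma hadamard_sym k x y : H k x y = H k y x.
Proof.
elim: k x y => [|k IH] x y; first by rewrite /= !mxE eq_sym.
move: x y; apply: cons_idx_ind => i1 x1; apply: cons_idx_ind => i2 x2.
by rewrite !hadamard_consE IH !mxE andbC.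
Qed.

Lemma hadamard2_mulmx : H2 *m H2 = 2%:R%:M.
Proof.
apply/matrixP => i j; rewrite !mxE sum_ord2 !mxE.
by case: i j => [[|[|//]] ?] [[|[|//]] ?] /=; ring.
Qed.

Lemma hadamard_mulmx k : H k *m H k = (2 ^ k)%:R%:M.
Proof.
elim: k => [|k IH] /=; first by rewrite mulmx1.
by rewrite castmx_mul -tprodE hadamard2_mulmx IH tprod_scalar castmx_scalar
  expnS natrM.
Qed.

Lemma hadamard_orth k x x' :
  \sum_y H k x y * H k x' y = (2 ^ k)%:R * (x == x')%:R.
Proof.
rewrite mulr_natr; have /matrixP/(_ x x') := hadamard_mulmx k; rewrite !mxE => <-.
by apply: eq_bigr => y _; rewrite (hadamard_sym y x').
Qed.
End HadamardMatrix.

Section Adjoint.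
Variable C : numClosedFieldType.

Lemma adjmxE m n (A : 'M[C]_(m, n)) i j : adjmx A i j = (A j i)^*.
Proof. by rewrite !mxE. Qed.

Lemma adjmxK m n (A : 'M[C]_(m, n)) : adjmx (adjmx A) = A.
Proof. by apply/matrixP => i j; rewrite !adjmxE conjCK. Qed.

Lemma adjmxM m n p (A : 'M[C]_(m, n)) (B : 'M[C]_(n, p)) :
  adjmx (A *m B) = adjmx B *m adjmx A.
Proof.
apply/matrixP => i j; rewrite adjmxE !mxE rmorph_sum; apply: eq_bigr => l _.
by rewrite !adjmxE rmorphM mulrC.
Qed.

Lemma adjmxD m n (A B : 'M[C]_(m, n)) :
  adjmx (A + B) = adjmx A + adjmx B.
Proof. by apply/matrixP => i j; rewrite !mxE rmorphD. Qed.

Lemma adjmxB m n (A B : 'M[C]_(m, n)) : adjmx (A - B) = adjmx A - adjmx B.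
Proof. by apply/matrixP => i j; rewrite !mxE rmorphB. Qed.

Lemma adjmxZ m n a (A : 'M[C]_(m, n)) : adjmx (a *: A) = a^* *: adjmx A.
Proof. by apply/matrixP => i j; rewrite !mxE rmorphM. Qed.

Lemma adjmx_sum m n (I : finType) (F : I -> 'M[C]_(m, n)) :
  adjmx (\sum_i F i) = \sum_i adjmx (F i).
Proof.
apply/matrixP => i j; rewrite adjmxE !summxE rmorph_sum.
by apply: eq_bigr => l _; rewrite adjmxE.
Qed.

Lemma adjmx1 n : adjmx (1%:M : 'M[C]_n) = 1%:M.
Proof. by apply/matrixP => i j; rewrite !mxE eq_sym rmorph_nat. Qed.

Lemma adjmx_tprod m1 n1 m2 n2 (A : 'M[C]_(m1, n1)) (B : 'M[C]_(m2, n2)) :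
  adjmx (tprod A B) = tprod (adjmx A) (adjmx B).
Proof.
by apply: kron_matrixP => i1 i2 j1 j2; rewrite adjmxE !tprod_entry !adjmxE rmorphM.
Qed.

Lemma adjmx_castmx m n (e : m = n) (A : 'M[C]_m) :
  adjmx (castmx (e, e) A) = castmx (e, e) (adjmx A).
Proof. by case: n / e. Qed.

(* A Hermitian unitary (a "reflection") is an observable: its eigenvalues
   are +-1. *)
Definition reflection n (A : 'M[C]_n) : Prop := Defs.hermitian A /\ A *m A = 1%:M.

Lemma reflection_observable n (A : 'M[C]_n) : reflection A -> observable A.
Proof.
move=> [hA AA]; split => // a /eigenvalueP [v vA v0].
have : v *m A *m A = (a * a) *: v by rewrite vA -scalemxAl vA scalerA.
rewrite -mulmxA AA mulmx1 => /eqP; rewrite -{1}(scale1r v) -subr_eq0 -scalerBl.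
rewrite scaler_eq0 (negbTE v0) orbF subr_eq0 eq_sym -subr_eq0.
have -> : a * a - 1 = (a - 1) * (a + 1) by ring.
have m1_le1 : (-1 : C) <= 1 by rewrite -subr_ge0 opprK addr_ge0 ?ler01.
by rewrite mulf_eq0 subr_eq0 addr_eq0 => /orP[]/eqP->; rewrite lexx m1_le1.
Qed.
End Adjoint.

Section SpectralFacts.
Variable C : numClosedFieldType.

Lemma hermitian_spectral n (A : 'M[C]_n) : Defs.hermitian A ->
  exists (Q : 'M[C]_n) (D : 'rV[C]_n),
    [/\ Q *m adjmx Q = 1%:M, adjmx Q *m Q = 1%:M, A = Q *m diag_mx D *m adjmx Q
      & forall i, eigenvalue A (D 0 i)].
Proof.
move=> hA; have adjE (B : 'M[C]_n) : map_mx Num.conj B^T = adjmx B by rewrite /adjmx map_trmx.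
have /spectral.orthomx_spectralP eA : A \is spectral.normalmx by rewrite qualifE adjE hA.
set P := spectral.spectralmx A in eA; set D := spectral.spectral_diag A in eA.
have P_unitary := spectral.spectral_unitarymx A.
have PP : P *m adjmx P = 1%:M by rewrite -adjE; apply/spectral.unitarymxP.
have PP' : adjmx P *m P = 1%:M by apply: mulmx1C.
have {}eA : A = adjmx P *m diag_mx D *m P.
  by rewrite {1}eA spectral.invmx_unitary // adjE.
exists (adjmx P), D; rewrite adjmxK; split => // i; apply/eigenvalueP.
exists (row i P).
  rewrite eA !mulmxA -row_mul PP -row_mul mul1mx -row_mul mul_diag_mx.
  by apply/rowP => j; rewrite !mxE.
apply/negP => /eqP Pi0; have := row_mul i P (adjmx P).
rewrite PP Pi0 mul0mx row1 => /rowP/(_ i); rewrite !mxE !eqxx /=.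
by move/eqP; rewrite pnatr_eq0.
Qed.

(* Q diag(d) Q* is a Gram matrix Y Y* as soon as d >= 0 (take Y = Q sqrt d). *)
Lemma nonneg_diag_gram n (Q : 'M[C]_n) (d : 'rV[C]_n) : (forall i, 0 <= d 0 i) ->
  exists Y : 'M[C]_n, Q *m diag_mx d *m adjmx Q = Y *m adjmx Y.
Proof.
move=> d_ge0; exists (Q *m diag_mx (\row_i sqrtC (d 0 i))).
have adj_diag : adjmx (diag_mx (\row_i sqrtC (d 0 i))) = diag_mx (\row_i sqrtC (d 0 i)).
  apply/matrixP => i j; rewrite !mxE eq_sym.
  case: eqVneq => [->|_]; rewrite ?mulr1n ?mulr0n ?rmorph0 //.
  by rewrite geC0_conj // sqrtC_ge0.
rewrite adjmxM adj_diag [RHS]mulmxA -[in RHS](mulmxA Q) mulmx_diag.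
congr (_ *m diag_mx _ *m _); apply/rowP => i.
by rewrite !mxE -expr2 sqrtCK.
Qed.

Lemma density_gram n (rho : 'M[C]_n) : density rho -> exists R : 'M[C]_n, rho = R *m adjmx R.
Proof.
move=> [hr er _]; have [Q [D [_ _ rhoE eig]]] := hermitian_spectral hr.
by rewrite rhoE; apply: nonneg_diag_gram => i; apply/er/eig.
Qed.

Lemma observable_defect_gram n (A : 'M[C]_n) : observable A ->
  exists Y : 'M[C]_n, 1%:M - A *m A = Y *m adjmx Y.
Proof.
move=> [hA eA]; have [Q [D [QQ QQ' eQ eig]]] := hermitian_spectral hA.
have [|Y eY] := @nonneg_diag_gram n Q (\row_i (1 - D 0 i * D 0 i)).
  move=> i; rewrite mxE; have /andP[ge_m1 le1] := eA _ (eig i).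
  have -> : 1 - D 0 i * D 0 i = (1 - D 0 i) * (D 0 i - (-1)) by ring.
  by rewrite mulr_ge0 // subr_ge0.
exists Y; rewrite -eY; have -> : A *m A = Q *m diag_mx (\row_i (D 0 i * D 0 i)) *m adjmx Q.
  by rewrite {1 2}eQ !mulmxA -(mulmxA _ (adjmx Q)) QQ' mulmx1 -(mulmxA Q) mulmx_diag.
have -> : diag_mx (\row_i (1 - D 0 i * D 0 i)) = 1%:M - diag_mx (\row_i (D 0 i * D 0 i)).
  by apply/matrixP => i j; rewrite !mxE; case: (i == j); rewrite ?mulr1n ?mulr0n ?subr0.
by rewrite mulmxBr mulmx1 mulmxBl QQ.
Qed.
End SpectralFacts.

Section SingularValue.
Variable C : numClosedFieldType.

Lemma eigenvalue_scalar n (a b : C) : (0 < n)%N ->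
  eigenvalue (a%:M : 'M_n) b = (b == a).
Proof.
move=> n_gt0; apply/eigenvalueP/eqP => [[v vE v0] | ->].
  move/eqP: vE; rewrite mul_mx_scalar -subr_eq0 -scalerBl scaler_eq0 (negbTE v0).
  by rewrite orbF subr_eq0 => /eqP.
exists (const_mx 1); first by rewrite mul_mx_scalar.
apply/negP => /eqP/rowP/(_ (Ordinal n_gt0)); rewrite !mxE => /eqP.
by rewrite oner_eq0.
Qed.

Lemma hadamard_conj k x y : (hadamard C k x y)^* = hadamard C k x y.
Proof. by case: (hadamard_sign C x y) => ->; rewrite ?rmorphN rmorph1. Qed.

Lemma hadamard_adj k : adjmx (hadamard C k) = hadamard C k.
Proof. by apply/matrixP => i j; rewrite adjmxE hadamard_conj hadamard_sym. Qed.

(* Since H_k* H_k = 2^k I, the only singular value of H_k is 2^(k/2). *)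
Lemma hadamard_singular_value k (s : C) :
  largest_singular_value (hadamard C k) s <-> s = sqrtC (2 ^ k)%:R.
Proof.
have n_gt0 : (0 < 2 ^ k)%N by rewrite expn_gt0.
have gram : adjmx (hadamard C k) *m hadamard C k = (2 ^ k)%:R%:M.
  by rewrite hadamard_adj hadamard_mulmx.
have sq_eq t : 0 <= t -> (t ^+ 2 == (2 ^ k)%:R) = (t == sqrtC (2 ^ k)%:R).
  move=> t_ge0; apply/eqP/eqP => [<- | ->]; first by rewrite sqrCK.
  by rewrite sqrtCK.
rewrite /largest_singular_value gram; split => [[s_ge0] | ->].
  by rewrite eigenvalue_scalar // sq_eq // => /eqP.
split; first by rewrite sqrtC_ge0 ler0n.
  by rewrite eigenvalue_scalar // sq_eq ?sqrtC_ge0 ?ler0n.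
by move=> t t_ge0; rewrite eigenvalue_scalar // sq_eq // => /eqP->.
Qed.
End SingularValue.

(* The common final step of both upper bounds: if 0 <= u - 2 t q + v with
   u, v <= t^2 m and t > 0, then q <= m t. *)
Lemma le_of_quadratic (R : numDomainType) (t m q u v : R) : 0 < t ->
  u <= t * t * m -> v <= t * t * m -> 0 <= u - 2 * t * q + v -> q <= m * t.
Proof.
move=> t_gt0 u_le v_le /le_trans/(_ (lerD (lerB u_le (lexx _)) v_le)) ge0.
have : 0 <= 2 * t * (m * t - q) by move: ge0; congr (_ <= _); ring.
by rewrite pmulr_rge0 ?subr_ge0 // mulr_gt0 // ltr0n.
Qed.

Section StateFunctional.
Variables (C : numClosedFieldType) (d : nat) (rho : 'M[C]_d).

Definition state (X : 'M[C]_d) : C := \tr (rho *m X).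

Lemma stateB (X Y : 'M[C]_d) : state (X - Y) = state X - state Y.
Proof. by rewrite /state mulmxBr raddfB. Qed.

Lemma stateZ s (X : 'M[C]_d) : state (s *: X) = s * state X.
Proof. by rewrite /state -scalemxAr mxtraceZ. Qed.

Lemma state_sum (I : finType) (F : I -> 'M[C]_d) :
  state (\sum_i F i) = \sum_i state (F i).
Proof. by rewrite /state mulmx_sumr raddf_sum. Qed.

Hypothesis rho_density : density rho.

Lemma state_gram_ge0 (K : 'M[C]_d) : 0 <= state (K *m adjmx K).
Proof.
rewrite /state; have [R ->] := density_gram rho_density.
rewrite (mulmxA _ K) mxtrace_mulC !mulmxA.
have -> : adjmx K *m R *m adjmx R *m K = (adjmx K *m R) *m adjmx (adjmx K *m R).
  by rewrite adjmxM adjmxK !mulmxA.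
rewrite /mxtrace; apply: sumr_ge0 => i _; rewrite mxE; apply: sumr_ge0 => j _.
by rewrite adjmxE mul_conjC_ge0.
Qed.

Lemma state_sq_le1 (X Y : 'M[C]_d) :
  1%:M - X *m X = Y *m adjmx Y -> state (X *m X) <= 1.
Proof.
have state1 : state 1%:M = 1 by rewrite /state mulmx1; case: rho_density.
by move=> /(congr1 state); rewrite stateB state1 => eq1; rewrite -subr_ge0 eq1 state_gram_ge0.
Qed.
End StateFunctional.

Section CorrelationBound.
(* Proof: with c_y = sum_x g_xy a_x, expand 0 <= sum_y rho((c_y - t b_y)^2). *)
Variables (C : numClosedFieldType) (d n : nat) (rho : 'M[C]_d).
Variables (g : 'M[C]_n) (t : C) (a b : 'I_n -> 'M[C]_d).
Hypothesis rho_density : density rho.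
Hypothesis t_gt0 : 0 < t.
Hypothesis g_real : forall x y, (g x y)^* = g x y.
Hypothesis g_orth : forall x x', \sum_y g x y * g x' y = t * t * (x == x')%:R.
Hypotheses (a_herm : forall x, adjmx (a x) = a x) (b_herm : forall y, adjmx (b y) = b y).
Hypothesis ab_comm : forall x y, a x *m b y = b y *m a x.
Hypotheses (a_sq_le1 : forall x, state rho (a x *m a x) <= 1)
  (b_sq_le1 : forall y, state rho (b y *m b y) <= 1).

Local Notation tau := (state rho).
Let c y := \sum_x g x y *: a x.

Let sum_sq_le (F : 'I_n -> 'M[C]_d) :
  (forall x, tau (F x *m F x) <= 1) -> t * t * \sum_x tau (F x *m F x) <= t * t * n%:R.
Proof.
move=> le1; apply: ler_wpM2l; first by rewrite mulr_ge0 ?ltW.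
by apply: le_trans (ler_sum _ (fun x _ => le1 x)) _; rewrite sumr_const card_ord.
Qed.

(* The rows of g are orthogonal of norm t, so the c_y carry the total weight
   t^2 sum_x rho(a_x^2). *)
Let sum_sq_c : \sum_y tau (c y *m c y) = t * t * \sum_x tau (a x *m a x).
Proof.
have sq_c y : tau (c y *m c y) = \sum_x \sum_x' g x y * g x' y * tau (a x *m a x').
  rewrite /c mulmx_suml state_sum; apply: eq_bigr => x _.
  rewrite -scalemxAl stateZ mulmx_sumr state_sum mulr_sumr; apply: eq_bigr => x' _.
  by rewrite -scalemxAr stateZ mulrA.
under eq_bigr => y _ do rewrite sq_c.
rewrite exchange_big mulr_sumr; apply: eq_bigr => x _ /=.
rewrite exchange_big -(sum_delta x (fun x' => t * t * tau (a x *m a x'))).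
by apply: eq_bigr => x' _; rewrite -mulr_suml g_orth; ring.
Qed.

Lemma correlation_bound : \sum_x \sum_y g x y * tau (a x *m b y) <= n%:R * t.
Proof.
pose Z y := c y - t *: b y.
have c_herm y : adjmx (c y) = c y.
  by rewrite /c adjmx_sum; apply: eq_bigr => x _; rewrite adjmxZ a_herm g_real.
have Z_herm y : adjmx (Z y) = Z y.
  by rewrite /Z adjmxB adjmxZ geC0_conj ?ltW // c_herm b_herm.
have bc_comm y : b y *m c y = c y *m b y.
  rewrite /c mulmx_sumr mulmx_suml; apply: eq_bigr => x _.
  by rewrite -scalemxAr -scalemxAl ab_comm.
have sq_Z y : tau (Z y *m Z y) =
    tau (c y *m c y) - 2 * t * tau (c y *m b y) + t * t * tau (b y *m b y).
  rewrite /Z mulmxBl !mulmxBr -!scalemxAl -!scalemxAr bc_comm scalerA.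
  by rewrite !stateB !stateZ; ring.
have value_eq : \sum_x \sum_y g x y * tau (a x *m b y) = \sum_y tau (c y *m b y).
  rewrite exchange_big /=; apply: eq_bigr => y _.
  by rewrite /c mulmx_suml state_sum; apply: eq_bigr => x _; rewrite -scalemxAl stateZ.
rewrite value_eq; apply: le_of_quadratic t_gt0 (sum_sq_le a_sq_le1) (sum_sq_le b_sq_le1) _.
have : 0 <= \sum_y tau (Z y *m Z y).
  by apply: sumr_ge0 => y _; rewrite -{2}Z_herm state_gram_ge0.
by rewrite (eq_bigr _ (fun y _ => sq_Z y)) big_split sumrB /= -!mulr_sumr sum_sq_c.
Qed.
End CorrelationBound.

Lemma sqrtC_cube (C : numClosedFieldType) (m : nat) :
  sqrtC (m ^ 3)%:R = m%:R * sqrtC m%:R :> C.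
Proof. by rewrite expnSr natrM sqrtCM ?nnegrE ?ler0n // natrX sqrCK ?ler0n. Qed.

Section QuantumUpperBound.
Variables (C : numClosedFieldType) (d1 d2 : nat) (rho : 'M[C]_(d1 * d2)).
Hypothesis rho_density : density rho.

(* Alice's observable A acts as A (x) 1, Bob's B as 1 (x) B; these commute
   and, for observables, have squares of weight at most 1. *)
Lemma left_observable_sq_le1 (A : 'M[C]_d1) : observable A ->
  state rho (tprod A 1%:M *m tprod A 1%:M) <= 1.
Proof.
move=> /observable_defect_gram[Y eY]; apply: (state_sq_le1 rho_density (Y := tprod Y 1%:M)).
by rewrite -tprodE mulmx1 -[X in X - _]tprod1 -tprodBl eY adjmx_tprod adjmx1 -tprodE mulmx1.
Qed.

Lemma right_observable_sq_le1 (B : 'M[C]_d2) : observable B ->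
  state rho (tprod 1%:M B *m tprod 1%:M B) <= 1.
Proof.
move=> /observable_defect_gram[Y eY]; apply: (state_sq_le1 rho_density (Y := tprod 1%:M Y)).
by rewrite -tprodE mulmx1 -[X in X - _]tprod1 -tprodBr eY adjmx_tprod adjmx1 -tprodE mulmx1.
Qed.

(* Q(H_k) <= 2^(3k/2): the correlation bound with t = 2^(k/2). *)
Lemma hadamard_quantum_bound k (A1 : 'I_(2 ^ k) -> 'M[C]_d1) (A2 : 'I_(2 ^ k) -> 'M[C]_d2) :
  (forall x, observable (A1 x)) -> (forall y, observable (A2 y)) ->
  qvalue (hadamard C k) rho A1 A2 <= sqrtC (2 ^ (3 * k))%:R.
Proof.
move=> obs1 obs2; rewrite mulnC expnM sqrtC_cube.
pose a x := tprod (A1 x) (1%:M : 'M[C]_d2); pose b y := tprod (1%:M : 'M[C]_d1) (A2 y).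
have ab_prod x y : tprod (A1 x) (A2 y) = a x *m b y by rewrite -tprodE mulmx1 mul1mx.
have -> : qvalue (hadamard C k) rho A1 A2 =
    \sum_x \sum_y hadamard C k x y * state rho (a x *m b y).
  by apply: eq_bigr => x _; apply: eq_bigr => y _; rewrite ab_prod.
apply: correlation_bound => //.
- by rewrite sqrtC_gt0 ltr0n expn_gt0.
- exact: hadamard_conj.
- by move=> x x'; rewrite hadamard_orth -expr2 sqrtCK.
- by move=> x; rewrite adjmx_tprod adjmx1 (proj1 (obs1 x)).
- by move=> y; rewrite adjmx_tprod adjmx1 (proj1 (obs2 y)).
- by move=> x y; rewrite -!tprodE !mulmx1 !mul1mx.
- by move=> x; apply: left_observable_sq_le1.
- by move=> y; apply: right_observable_sq_le1.
Qed.
End QuantumUpperBound.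

Section MaximallyEntangled.
Variables (C : numClosedFieldType) (n : nat).
Hypothesis n_gt0 : (0 < n)%N.

Definition max_entangled_vec : 'cV[C]_(n * n) :=
  \col_l ((sqrtC n%:R)^-1 * (kron_fst l == kron_snd l)%:R).

Definition max_entangled : 'M[C]_(n * n) :=
  max_entangled_vec *m adjmx max_entangled_vec.

Let s := (sqrtC n%:R)^-1 : C.

Let s_conj : s^* = s.
Proof. by rewrite geC0_conj // invr_ge0 sqrtC_ge0 ler0n. Qed.

Let s_sq : s * s = n%:R^-1.
Proof. by rewrite -invfM -expr2 sqrtCK. Qed.

Let vecE i j c : max_entangled_vec (kron_idx i j) c = s * (i == j)%:R.
Proof. by rewrite mxE kron_fstK kron_sndK. Qed.

Let adj_vecE i j c : adjmx max_entangled_vec c (kron_idx i j) = s * (i == j)%:R.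
Proof. by rewrite adjmxE vecE rmorphM rmorph_nat; congr (_ * _); exact: s_conj. Qed.

Lemma max_entangled_vec_unit : adjmx max_entangled_vec *m max_entangled_vec = 1%:M.
Proof.
apply/matrixP => c c'; rewrite !ord1 !mxE sum_kron_idx /=.
rewrite (eq_bigr (fun=> s * s)) => [|i _]; last first.
  rewrite -[RHS](sum_delta i); apply: eq_bigr => j _.
  by rewrite adj_vecE vecE mulrACA -natrM mulnb andbb mulrC.
by rewrite sumr_const card_ord s_sq -[_ *+ n]mulr_natr mulVf // pnatr_eq0 -lt0n.
Qed.

Lemma max_entangled_density : density max_entangled.
Proof.
have idem : max_entangled *m max_entangled = max_entangled.
  by rewrite /max_entangled mulmxA -(mulmxA _ (adjmx _)) max_entangled_vec_unit mulmx1.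
split.
- by rewrite /Defs.hermitian /max_entangled adjmxM adjmxK.
- move=> a /eigenvalueP [u uE u0].
  have : u *m max_entangled *m max_entangled = (a * a) *: u.
    by rewrite uE -scalemxAl uE scalerA.
  rewrite -mulmxA idem uE => /eqP; rewrite -subr_eq0 -scalerBl scaler_eq0 (negbTE u0) orbF.
  have -> : a - a * a = a * (1 - a) by ring.
  by rewrite mulf_eq0 subr_eq0 => /orP[]/eqP <-; rewrite ?lexx ?ler01.
- by rewrite /max_entangled mxtrace_mulC max_entangled_vec_unit mxtrace1.
Qed.

Lemma max_entangled_tprod (X Y : 'M[C]_n) :
  \tr (max_entangled *m tprod X Y) = n%:R^-1 * \sum_i \sum_j X i j * Y i j.
Proof.
rewrite -s_sq /max_entangled -mulmxA mxtrace_mulC /mxtrace big_ord1 !mxE sum_kron_idx.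
transitivity (\sum_j1 \sum_j2 (j1 == j2)%:R * (s * \sum_i s * (X i j1 * Y i j2))).
  apply: eq_bigr => j1 _; apply: eq_bigr => j2 _.
  rewrite mxE sum_kron_idx vecE mulrC -mulrA mulrCA; congr (_ * (_ * _)).
  apply: eq_bigr => i1 _.
  rewrite -(sum_delta i1 (fun i2 => s * (X i1 j1 * Y i2 j2))); apply: eq_bigr => i2 _.
  by rewrite adj_vecE tprod_entry; ring.
under eq_bigr => j1 _ do rewrite sum_delta mulr_sumr.
rewrite exchange_big mulr_sumr; apply: eq_bigr => i _.
by rewrite mulr_sumr; apply: eq_bigr => j _; ring.
Qed.
End MaximallyEntangled.

Lemma rotated_reflection (C : numClosedFieldType) n (Z X : 'M[C]_n) (c s : C) :
  reflection Z -> reflection X -> Z *m X = - (X *m Z) ->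
  c^* = c -> s^* = s -> c * c + s * s = 1 -> reflection (c *: Z + s *: X).
Proof.
move=> [hZ ZZ] [hX XX] anti cR sR cs1; split.
  by rewrite /Defs.hermitian adjmxD !adjmxZ cR sR hZ hX.
rewrite mulmxDl !mulmxDr -!scalemxAl -!scalemxAr !scalerA ZZ XX anti scalerN.
by rewrite (mulrC s c) addrA addrNK -scalerDl cs1 scale1r.
Qed.

Section TensorFamily.
Variable F : fieldType.

Fixpoint tensor_family (P : 'I_2 -> 'M[F]_2) (k : nat) : 'I_(2 ^ k) -> 'M[F]_(2 ^ k) :=
  match k return 'I_(2 ^ k) -> 'M[F]_(2 ^ k) with
  | 0 => fun _ => 1%:M
  | k'.+1 => fun x => castmx (pow2S_eq k', pow2S_eq k')
                        (tprod (P (idx_head x)) (@tensor_family P k' (idx_tail x)))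
  end.
Arguments tensor_family P k x : clear implicits.

Lemma tensor_family_consE P k x1 x2 i1 i2 j1 j2 :
  tensor_family P k.+1 (cons_idx x1 x2) (cons_idx i1 i2) (cons_idx j1 j2) =
  P x1 i1 j1 * tensor_family P k x2 i2 j2.
Proof.
rewrite /= castmxE idx_headK idx_tailK -tprod_entry.
by congr (tprod _ _ _ _); apply: val_inj.
Qed.

(* The Frobenius correlation sum_xy g_xy <A_x, B_y>, which is what a
   maximally entangled state measures (up to normalization). *)
Definition frob_corr m n (g : 'M[F]_m) (A B : 'I_m -> 'M[F]_n) : F :=
  \sum_x \sum_y g x y * \sum_i \sum_j A x i j * B y i j.

Let sum_prod4 a b c d (G : 'I_a -> 'I_b -> F) (G' : 'I_c -> 'I_d -> F) :
  \sum_(x1 < a) \sum_(x2 < c) \sum_(y1 < b) \sum_(y2 < d) G x1 y1 * G' x2 y2 =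
  (\sum_(x1 < a) \sum_(y1 < b) G x1 y1) * (\sum_(x2 < c) \sum_(y2 < d) G' x2 y2).
Proof.
rewrite mulr_suml; apply: eq_bigr => x1 _; rewrite exchange_big mulr_suml.
by apply: eq_bigr => y1 _; rewrite mulr_sumr; apply: eq_bigr => x2 _; rewrite mulr_sumr.
Qed.

Lemma frob_corr_tensor P Q k :
  frob_corr (hadamard F k) (tensor_family P k) (tensor_family Q k) =
  frob_corr (hadamard2 F) P Q ^+ k.
Proof.
elim: k => [|k IH]; first by rewrite /frob_corr !big_ord1 /= !mxE /= !mulr1.
rewrite exprS -IH /frob_corr -sum_prod4 sum_cons_idx.
apply: eq_bigr => x1 _; apply: eq_bigr => x2 _.
rewrite sum_cons_idx; apply: eq_bigr => y1 _; apply: eq_bigr => y2 _.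
rewrite hadamard_consE mulrACA -sum_prod4 sum_cons_idx; congr (_ * _).
apply: eq_bigr => i1 _; apply: eq_bigr => i2 _.
rewrite sum_cons_idx; apply: eq_bigr => j1 _; apply: eq_bigr => j2 _.
by rewrite !tensor_family_consE mulrACA.
Qed.
End TensorFamily.
Arguments tensor_family {F} P k x.

Lemma tensor_family_reflection (C : numClosedFieldType) (P : 'I_2 -> 'M[C]_2) k x :
  (forall y, reflection (P y)) -> reflection (tensor_family P k x).
Proof.
move=> reflP; elim: k x => [|k IH] x /=; first by split; [exact: adjmx1 | exact: mul1mx].
have [hP PP] := reflP (idx_head x); have [hT TT] := IH (idx_tail x).
split; first by rewrite /Defs.hermitian adjmx_castmx adjmx_tprod hP hT.
by rewrite castmx_mul -tprodE PP TT tprod1 castmx_scalar.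
Qed.

Section PauliStrategy.
Variable C : numClosedFieldType.

(* The CHSH strategy: Alice measures Z or X, Bob measures (Z +- X)/sqrt 2. *)
Definition pauliZ : 'M[C]_2 := \matrix_(i, j) ((i == j)%:R * (-1) ^+ i).
Definition pauliX : 'M[C]_2 := \matrix_(i, j) (i != j)%:R.

Definition alice_obs (x : 'I_2) : 'M[C]_2 := if x == 0 :> nat then pauliZ else pauliX.
Definition bob_obs (y : 'I_2) : 'M[C]_2 :=
  (sqrtC 2)^-1 *: pauliZ + ((-1) ^+ y / sqrtC 2) *: pauliX.

Let r := sqrtC 2 : C.

Let r_gt0 : 0 < r.
Proof. by rewrite sqrtC_gt0 ltr0n. Qed.

Let r_sq : r * r = 2.
Proof. by rewrite -expr2 sqrtCK. Qed.

Lemma pauliZ_reflection : reflection pauliZ.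
Proof.
split; apply/matrixP => i j; rewrite !mxE ?sum_ord2 ?mxE;
  case: i j => [[|[|//]] ?] [[|[|//]] ?] /=; rewrite ?rmorph0 ?rmorph1 ?rmorphN //; ring.
Qed.

Lemma pauliX_reflection : reflection pauliX.
Proof.
split; apply/matrixP => i j; rewrite !mxE ?sum_ord2 ?mxE;
  case: i j => [[|[|//]] ?] [[|[|//]] ?] /=; rewrite ?rmorph0 ?rmorph1 //; ring.
Qed.

Lemma pauli_anticomm : pauliZ *m pauliX = - (pauliX *m pauliZ).
Proof.
apply/matrixP => i j; rewrite !mxE !sum_ord2 !mxE.
by case: i j => [[|[|//]] ?] [[|[|//]] ?] /=; ring.
Qed.

Lemma alice_obs_reflection x : reflection (alice_obs x).
Proof. by rewrite /alice_obs; case: ifP => _; [exact: pauliZ_reflection | exact: pauliX_reflection]. Qed.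

Lemma bob_obs_reflection y : reflection (bob_obs y).
Proof.
have r_conj : r^-1^* = r^-1 by rewrite geC0_conj // invr_ge0 ltW.
have r_inv_sq : r^-1 * r^-1 + r^-1 * r^-1 = 1.
  by rewrite -mulr2n -mulr_natr -invfM r_sq mulVf // pnatr_eq0.
apply: rotated_reflection pauliZ_reflection pauliX_reflection pauli_anticomm _ _ _.
- exact: r_conj.
- by rewrite rmorphM rmorphXn rmorphN1; congr (_ * _); exact: r_conj.
- by rewrite mulrACA -exprMn mulrNN mulr1 expr1n mul1r; exact: r_inv_sq.
Qed.

Lemma chsh_frob_corr : frob_corr (hadamard2 C) alice_obs bob_obs = 4 * r.
Proof.
transitivity (8 * r^-1).
  rewrite /frob_corr !big_ord_recl !big_ord0 /alice_obs /bob_obs /= !mxE /=.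
  by ring.
apply: (mulIf (lt0r_neq0 r_gt0)); rewrite -mulrA mulVf ?lt0r_neq0 // -mulrA r_sq.
by ring.
Qed.
End PauliStrategy.

Lemma sqrtC_natX (C : numClosedFieldType) (m k : nat) :
  sqrtC (m ^ k)%:R = sqrtC m%:R ^+ k :> C.
Proof. by rewrite -[RHS]sqrCK ?exprn_ge0 ?sqrtC_ge0 ?ler0n // exprAC sqrtCK natrX. Qed.

Section QuantumOptimum.
Variables (C : numClosedFieldType) (k : nat).

Lemma hadamard_optimal_strategy :
  qstrategy (max_entangled C (2 ^ k))
    (tensor_family (alice_obs C) k) (tensor_family (bob_obs C) k).
Proof.
split; first by apply: max_entangled_density; rewrite expn_gt0.
by split => x; apply/reflection_observable/tensor_family_reflection;
  [exact: alice_obs_reflection | exact: bob_obs_reflection].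
Qed.

Lemma hadamard_optimal_value :
  qvalue (hadamard C k) (max_entangled C (2 ^ k))
    (tensor_family (alice_obs C) k) (tensor_family (bob_obs C) k) = sqrtC (2 ^ (3 * k))%:R.
Proof.
transitivity ((2 ^ k)%:R^-1 *
    frob_corr (hadamard C k) (tensor_family (alice_obs C) k) (tensor_family (bob_obs C) k)).
  rewrite /frob_corr mulr_sumr; apply: eq_bigr => x _; rewrite mulr_sumr.
  by apply: eq_bigr => y _; rewrite max_entangled_tprod ?expn_gt0 // mulrCA.
rewrite frob_corr_tensor chsh_frob_corr mulnC expnM sqrtC_cube sqrtC_natX exprMn.
have -> : 4 ^+ k = (2 ^ k)%:R * (2 ^ k)%:R :> C by rewrite -natrM -expnMn natrX.
by rewrite mulrA mulKf ?pnatr_eq0 ?expn_eq0.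
Qed.
End QuantumOptimum.

Lemma sgnb_sq (R : pzRingType) (b : bool) : sgnb R b * sgnb R b = 1.
Proof. by case: b; rewrite /sgnb ?expr0 ?mulr1 // expr1 mulrNN mulr1. Qed.

Section LocalUpperBound.
(* The classical analogue of the correlation bound: if the rows of g are
   orthogonal of squared norm t^2, every local value is at most n t. *)
Variables (R : realDomainType) (n : nat) (g : 'M[R]_n) (t : R).
Hypothesis t_gt0 : 0 < t.
Hypothesis g_orth : forall x x', \sum_y g x y * g x' y = t * t * (x == x')%:R.

Lemma local_value_le (a b : {ffun 'I_n -> bool}) : local_value g a b <= n%:R * t.
Proof.
pose alpha x := sgnb R (a x); pose beta y := sgnb R (b y).
pose w y := \sum_x g x y * alpha x.
have sum_sq_sign (s : {ffun 'I_n -> bool}) : \sum_x sgnb R (s x) * sgnb R (s x) = n%:R.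
  by rewrite (eq_bigr (fun=> 1)) => [|x _]; rewrite ?sgnb_sq // sumr_const card_ord.
have value_eq : local_value g a b = \sum_y beta y * w y.
  rewrite /local_value exchange_big; apply: eq_bigr => y _; rewrite mulr_sumr.
  by apply: eq_bigr => x _; rewrite /alpha /beta; ring.
have sum_sq_w : \sum_y w y * w y = t * t * n%:R.
  transitivity (\sum_x \sum_x' alpha x * alpha x' * \sum_y g x y * g x' y).
    rewrite /w; under eq_bigr => y _ do rewrite big_distrlr /=.
    rewrite exchange_big; apply: eq_bigr => x _; rewrite exchange_big.
    by apply: eq_bigr => x' _; rewrite mulr_sumr; apply: eq_bigr => y _; ring.
  rewrite -(sum_sq_sign a) mulr_sumr; apply: eq_bigr => x _.
  rewrite -(sum_delta x (fun x' => t * t * (alpha x * alpha x'))).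
  by apply: eq_bigr => x' _; rewrite g_orth; ring.
rewrite value_eq; apply: (le_of_quadratic (u := t * t * \sum_y beta y * beta y)
  (v := \sum_y w y * w y) t_gt0).
- by rewrite sum_sq_sign.
- by rewrite sum_sq_w.
have : 0 <= \sum_y (t * beta y - w y) * (t * beta y - w y).
  by apply: sumr_ge0 => y _; rewrite -expr2 sqr_ge0.
congr (_ <= _); rewrite !mulr_sumr -sumrB -big_split /=.
by apply: eq_bigr => y _; rewrite /beta; ring.
Qed.
End LocalUpperBound.

Section BentFunction.
Variable F : fieldType.

(* The sign pattern f(x) = H(x_1, x_2) H(x_3, x_4) ... of the bent function
   x_1 x_2 + x_3 x_4 + ...; for even k it is an eigenvector of H_k. *)
Fixpoint bent (k : nat) : 'I_(2 ^ k) -> F :=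
  match k return 'I_(2 ^ k) -> F with
  | k'.+2 => fun x =>
      hadamard2 F (idx_head x) (idx_head (idx_tail x)) * @bent k' (idx_tail (idx_tail x))
  | _ => fun _ => 1
  end.
Arguments bent : clear implicits.

Lemma bent_consE k x1 x2 x :
  bent k.+2 (cons_idx x1 (cons_idx x2 x)) = hadamard2 F x1 x2 * bent k x.
Proof. by rewrite /= !idx_headK !idx_tailK idx_headK. Qed.

Lemma bent_sign k x : bent k x = 1 \/ bent k x = -1.
Proof.
elim/ltn_ind: k x => -[|[|k]] IH x; try by left.
move: x; apply: cons_idx_ind => x1; apply: cons_idx_ind => x2 x.
rewrite bent_consE; have [->|->] := hadamard2_sign F x1 x2;
  have [->|->] := IH k (ltnW (ltnSn _)) x; rewrite ?mulr1 ?mulrN1 ?opprK; by [left|right].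
Qed.

Lemma bent_sq k x : bent k x ^+ 2 = 1.
Proof. by case: (bent_sign x) => ->; rewrite ?sqrrN expr1n. Qed.

Lemma hadamard2_bent_step (x1 x2 : 'I_2) :
  \sum_(y1 < 2) \sum_(y2 < 2) hadamard2 F x1 y1 * hadamard2 F x2 y2 * hadamard2 F y1 y2
  = 2 * hadamard2 F x1 x2.
Proof.
rewrite !sum_ord2 !mxE.
by case: x1 x2 => [[|[|//]] ?] [[|[|//]] ?] /=; ring.
Qed.

Lemma hadamard_bent m x :
  \sum_y hadamard F (m + m) x y * bent (m + m) y = (2 ^ m)%:R * bent (m + m) x.
Proof.
elim: m x => [|m IH] x; first by rewrite big_ord1 /= !mxE; case: x => [[|//] ?] /=; rewrite mulr1.
move: x; have -> : (m.+1 + m.+1 = (m + m).+2)%N by rewrite addnS addSn.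
apply: cons_idx_ind => x1; apply: cons_idx_ind => x2 x.
rewrite sum_cons_idx.
under eq_bigr => y1 _ do rewrite sum_cons_idx.
transitivity (\sum_(y1 < 2) \sum_(y2 < 2)
    (hadamard2 F x1 y1 * hadamard2 F x2 y2 * hadamard2 F y1 y2) *
    \sum_y (hadamard F (m + m) x y * bent (m + m) y)).
  apply: eq_bigr => y1 _; apply: eq_bigr => y2 _; rewrite mulr_sumr.
  by apply: eq_bigr => y _; rewrite !hadamard_consE bent_consE; ring.
under eq_bigr => y1 _ do rewrite -mulr_suml.
by rewrite -mulr_suml hadamard2_bent_step IH bent_consE expnS natrM; ring.
Qed.
End BentFunction.
Arguments bent {F} k.

(* For even k = 2m the local bound of H_k is 2^(3m): the upper bound is the
   previous lemma with t = 2^m, and the bent sign pattern attains it. *)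
Lemma hadamard_local_bound m : local_bound (hadamard rat (m + m)) = (2 ^ (3 * m))%:R.
Proof.
have t_gt0 : 0 < (2 ^ m)%:R :> rat by rewrite ltr0n expn_gt0.
have bound_eq : (2 ^ (3 * m))%:R = (2 ^ (m + m))%:R * (2 ^ m)%:R :> rat.
  by rewrite -natrM -!expnD; congr (2 ^ _)%:R; lia.
have upper a b : local_value (hadamard rat (m + m)) a b <= (2 ^ (3 * m))%:R.
  rewrite bound_eq; apply: (local_value_le (t := (2 ^ m)%:R)) => // x x'.
  by rewrite hadamard_orth; congr (_ * _); rewrite -natrM -expnD.
pose f := [ffun x => bent (m + m) x == -1 :> rat].
have sgn_f x : sgnb rat (f x) = bent (m + m) x.
  by rewrite ffunE; case: (bent_sign rat x) => ->; rewrite /sgnb ?eqxx.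
have attained : local_value (hadamard rat (m + m)) f f = (2 ^ (3 * m))%:R.
  transitivity (\sum_x bent (m + m) x * \sum_y hadamard rat (m + m) x y * bent (m + m) y).
    apply: eq_bigr => x _; rewrite mulr_sumr.
    by apply: eq_bigr => y _; rewrite !sgn_f; ring.
  under eq_bigr => x _ do rewrite hadamard_bent mulrCA -expr2 bent_sq mulr1.
  by rewrite sumr_const card_ord bound_eq mulrC mulr_natr.
apply/eqP; rewrite eq_le; apply/andP; split.
  apply: bigmax_le => [|a _]; first exact: upper.
  by apply: bigmax_le => [|b _]; apply: upper.
rewrite -{1}attained; apply: le_trans (le_bigmax _ _ f).
exact: (le_bigmax _ (fun b => local_value _ f b) f).
Qed.

Lemma hadamard_local_bound_even k :
  ~~ odd k -> local_bound (hadamard rat k) = (2 ^ (3 * k./2))%:R.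
Proof.
move=> k_even; have -> : k = (k./2 + k./2)%N.
  by rewrite addnn -[LHS]odd_double_half (negbTE k_even).
by rewrite addnn doubleK -addnn; apply: hadamard_local_bound.
Qed.

Theorem mainTheorem6 (C : numClosedFieldType) (k : nat) (hk : (1 <= k)%N) :
  (* T := sqrt(M1 M2) ||g||_2 = 2^{3k/2}, with M1 = M2 = 2^k *)
  ((exists s : C, largest_singular_value (hadamard C k) s) /\
   (forall s : C, largest_singular_value (hadamard C k) s ->
      sqrtC ((2 ^ k)%:R * (2 ^ k)%:R) * s = sqrtC (2 ^ (3 * k))%:R)) /\
  (* Q(g) = 2^{3k/2}: upper bound for every quantum strategy ... *)
  ((forall (d1 d2 : nat) (rho : 'M[C]_(d1 * d2))
           (A1 : 'I_(2 ^ k) -> 'M[C]_d1) (A2 : 'I_(2 ^ k) -> 'M[C]_d2),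
      qstrategy rho A1 A2 ->
      qvalue (hadamard C k) rho A1 A2 <= sqrtC (2 ^ (3 * k))%:R) /\
  (* ... and it is attained *)
   (exists (d1 d2 : nat) (rho : 'M[C]_(d1 * d2))
           (A1 : 'I_(2 ^ k) -> 'M[C]_d1) (A2 : 'I_(2 ^ k) -> 'M[C]_d2),
      qstrategy rho A1 A2 /\
      qvalue (hadamard C k) rho A1 A2 = sqrtC (2 ^ (3 * k))%:R)) /\
  (* for even k, B(g) = 2^{3k/2} *)
  (~~ odd k -> local_bound (hadamard rat k) = (2 ^ (3 * k./2))%:R).
Proof.
split; [split | split; [split | exact: hadamard_local_bound_even]].
- by exists (sqrtC (2 ^ k)%:R); apply/hadamard_singular_value.
- move=> s /hadamard_singular_value ->.
  by rewrite -expr2 sqrCK ?ler0n // mulnC expnM sqrtC_cube.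
- by move=> d1 d2 rho A1 A2 [rho_density [obs1 obs2]]; apply: hadamard_quantum_bound.
- exists (2 ^ k)%N, (2 ^ k)%N, (max_entangled C (2 ^ k)).
  exists (tensor_family (alice_obs C) k), (tensor_family (bob_obs C) k).
  by split; [exact: hadamard_optimal_strategy | exact: hadamard_optimal_value].
Qed.
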